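(* Let $n\ge 2$ and $x\in\mathbb{C}$. Then, as formal power series in $z$, $$M_{xJ_n+B_n}(z)=\frac{nxz\,\frac{d}{dz}\big(z\tilde M_{B_n}(z)\big)}{1-nxz\,\tilde M_{B_n}(z)}+M_{B_n}(z).$$
   Context: $J_n$ is the $n\times n$ all-ones matrix, and $B_n=i\,M$ where $M$ is the $n\times n$ matrix with zero diagonal, entries $1$ above and $-1$ below the diagonal. For an $n\times n$ matrix $C$, $M_C(z)=\operatorname{Tr}((I-zC)^{-1})=\sum_{m\ge0}\operatorname{Tr}(C^m)z^m$. Define the state $\omega(C)=\frac1n\sum_{i,j=1}^n c_{ij}$ for $C=[c_{ij}]$, and $\tilde M_{B_n}(z)=\omega((I-zB_n)^{-1})=\sum_{m\ge0}\omega(B_n^m)z^m$. *)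

From HB Require Import structures.
From mathcomp Require Import all_boot all_order all_algebra.
From mathcomp Require Import complex.
Set Implicit Arguments. Unset Strict Implicit. Unset Printing Implicit Defensive.
Import Order.TTheory GRing.Theory Num.Theory.
Local Open Scope ring_scope.

(* Formal power series over a ring C are represented by their coefficient
   sequences  nat -> C  (coefficient of z^m at index m). *)
Definition fps (C : Type) := nat -> C.

Section FPS.
Variable C : comRingType.

Definition fps_mul (f g : fps C) : fps C :=
  fun m => \sum_(i < m.+1) f i * g (m - i)%N.

Definition fps_one : fps C := fun m => if m is 0 then 1 else 0.

Fixpoint fps_pow (f : fps C) (k : nat) : fps C :=
  if k is k'.+1 then fps_mul f (fps_pow f k') else fps_one.

Definition fps_mulz (f : fps C) : fps C :=
  fun m => if m is m'.+1 then f m' else 0.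

Definition fps_scale (a : C) (f : fps C) : fps C := fun m => a * f m.

Definition fps_add (f g : fps C) : fps C := fun m => f m + g m.

Definition fps_deriv (f : fps C) : fps C := fun m => f m.+1 *+ m.+1.

(* For u with zero constant term, the formal inverse of (1 - u), i.e.
   1/(1-u) = sum_k u^k (only k <= m contribute to the coefficient of z^m). *)
Definition fps_inv_1m (u : fps C) : fps C :=
  fun m => \sum_(k < m.+1) fps_pow u k m.

End FPS.

Section Mats.
Variable R : rcfType.
Local Notation C := R[i].

Definition Jmx (n : nat) : 'M[C]_n := const_mx 1.

Definition Bmx (n : nat) : 'M[C]_n :=
  \matrix_(i < n, j < n)
     ('i * (if (i < j)%N then 1 else if (j < i)%N then -1 else 0)).

Definition omega (n : nat) (A : 'M[C]_n) : C :=
  n%:R^-1 * \sum_(i < n) \sum_(j < n) A i j.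

(* M_A(z) = Tr((I - zA)^{-1}) = sum_m Tr(A^m) z^m *)
Definition Mser (n : nat) (A : 'M[C]_n) : fps C := fun m => \tr (A ^+ m).

(* tilde M_A(z) = omega((I - zA)^{-1}) = sum_m omega(A^m) z^m *)
Definition Mtil (n : nat) (A : 'M[C]_n) : fps C := fun m => omega (A ^+ m).

End Mats.

From HB Require Import structures.
From mathcomp Require Import all_boot all_order all_algebra.
From mathcomp Require Import complex zify.
From Stdlib Require Import FunctionalExtensionality.
Set Implicit Arguments.
Unset Strict Implicit.
Unset Printing Implicit Defensive.

Import Order.TTheory GRing.Theory Num.Theory.
Local Open Scope ring_scope.

(* Let J be the all-ones matrix, sigma(X) the sum of the entries of X, so that
   J X J = sigma(X) J, and s_k = sigma(B^k).  Writing
   A^j = (B + xJ)^j = B^j + sum_l B^l (xJ) A^(j-1-l), the sums sigma(B^k A^j)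
   satisfy a convolution recursion whose solution is sum_l s_(k+l) G_(j-l),
   with G = 1/(1 - x z S(z)) and S = sum_k s_k z^k.  Expanding tr(A^m) the same way and summing over the
   triangle k + l <= m - 1 produces the derivative (zS)'.  Nothing about B is
   used, and n only enters through omega = sigma/n. *)

Section PowerSeries.
Variable C : comRingType.
Implicit Types (u f : fps C) (a b : C).

Lemma fps_scaleM a b f : fps_scale (a * b) f = fps_scale a (fps_scale b f).
Proof. by apply: functional_extensionality => m; rewrite /fps_scale mulrA. Qed.

Lemma fps_mulzZ a f : fps_mulz (fps_scale a f) = fps_scale a (fps_mulz f).
Proof.
by apply: functional_extensionality => -[|m]; rewrite /fps_scale /= ?mulr0.
Qed.

Lemma fps_derivZ a f : fps_deriv (fps_scale a f) = fps_scale a (fps_deriv f).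
Proof.
by apply: functional_extensionality => m; rewrite /fps_deriv /fps_scale mulrnAr.
Qed.

Lemma fps_pow_coef_lt u k m : u 0%N = 0 -> (m < k)%N -> fps_pow u k m = 0.
Proof.
move=> u0; elim: k m => [//|k IHk] m lt_mk /=.
rewrite /fps_mul big1 // => -[[|i] lt_im] _ /=; first by rewrite u0 mul0r.
by rewrite IHk ?mulr0 //; lia.
Qed.

Lemma fps_inv_1m_trunc u N m :
  u 0%N = 0 -> (m < N)%N -> fps_inv_1m u m = \sum_(k < N) fps_pow u k m.
Proof.
move=> u0 lt_mN; rewrite /fps_inv_1m.
rewrite (big_ord_widen _ (fun k => fps_pow u k m) lt_mN) big_mkcond.
apply: eq_bigr => k _.
by case: ifP => // /negbT; rewrite -leqNgt => /(fps_pow_coef_lt u0) ->.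
Qed.

Lemma fps_inv_1m_coef0 u : fps_inv_1m u 0 = 1.
Proof. by rewrite /fps_inv_1m big_ord1. Qed.

Lemma fps_inv_1mE u m :
  u 0%N = 0 -> fps_inv_1m u m = fps_one C m + fps_mul u (fps_inv_1m u) m.
Proof.
move=> u0; rewrite /fps_inv_1m big_ord_recl /=; congr (_ + _).
rewrite /fps_mul exchange_big /=; apply: eq_bigr => -[[|i] lt_im] _ /=.
  by rewrite u0 mul0r big1 // => k _; rewrite mul0r.
under eq_bigr do rewrite add0n.
by rewrite -mulr_sumr -(fps_inv_1m_trunc (N:=m)) //; lia.
Qed.

Lemma fps_inv_1m_scale_mulzS a f t :
  fps_inv_1m (fps_scale a (fps_mulz f)) t.+1 =
  a * \sum_(p < t.+1) f p * fps_inv_1m (fps_scale a (fps_mulz f)) (t - p)%N.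
Proof.
rewrite fps_inv_1mE /fps_scale ?mulr0 // add0r /fps_mul big_ord_recl.
rewrite mulr0 mul0r add0r mulr_sumr.
by apply: eq_bigr => p _; rewrite mulrA.
Qed.

End PowerSeries.

Lemma sum_triangle (V : nmodType) (f : nat -> V) m :
  \sum_(k < m) \sum_(l < m - k) f (k + l)%N = \sum_(q < m) f q *+ q.+1.
Proof.
elim: m => [|m IHm]; first by rewrite !big_ord0.
have inner (k : 'I_m.+1) :
    \sum_(l < m.+1 - k) f (k + l)%N = \sum_(l < m - k) f (k + l)%N + f m.
  have le_km : (k <= m)%N by rewrite -ltnS.
  by rewrite subSn // big_ord_recr /= subnKC.
rewrite (eq_bigr _ (fun k _ => inner k)) big_split /= sumr_const card_ord.
by rewrite big_ord_recr /= subnn big_ord0 addr0 IHm [RHS]big_ord_recr.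
Qed.

Lemma exprD_expand_l (T : pzRingType) (a b : T) m :
  (a + b) ^+ m = a ^+ m + \sum_(k < m) a ^+ k * b * (a + b) ^+ (m.-1 - k).
Proof.
elim: m => [|m IHm]; first by rewrite !expr0 big_ord0 addr0.
rewrite exprS mulrDl {1}IHm mulrDr -exprS big_ord_recl subn0 expr0 mul1r.
rewrite mulr_sumr -addrA; congr (_ + _); rewrite addrC; congr (_ + _).
by apply: eq_bigr => k _; rewrite !mulrA -exprS lift0 subnS predn_sub.
Qed.

Lemma exprD_expand_r (T : pzRingType) (a b : T) m :
  (a + b) ^+ m = a ^+ m + \sum_(k < m) (a + b) ^+ (m.-1 - k) * b * a ^+ k.
Proof.
elim: m => [|m IHm]; first by rewrite !expr0 big_ord0 addr0.
rewrite exprSr mulrDr {1}IHm mulrDl -exprSr big_ord_recl subn0 expr0 mulr1.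
rewrite mulr_suml -addrA; congr (_ + _); rewrite addrC; congr (_ + _).
by apply: eq_bigr => k _; rewrite -!mulrA -exprSr lift0 subnS predn_sub.
Qed.

Section EntrySum.
Variables (C : comRingType) (n : nat).
Implicit Types X Y : 'M[C]_n.

Definition mxsum X : C := \sum_(i < n) \sum_(j < n) X i j.

Fact mxsum_is_nmod_morphism : nmod_morphism mxsum.
Proof.
split=> [|X Y].
  by rewrite /mxsum big1 // => i _; rewrite big1 // => j _; rewrite mxE.
rewrite /mxsum -big_split; apply: eq_bigr => i _.
by rewrite -big_split; apply: eq_bigr => j _; rewrite mxE.
Qed.
HB.instance Definition _ := GRing.isNmodMorphism.Build 'M[C]_n C mxsum
  mxsum_is_nmod_morphism.

Lemma mxsumZ a X : mxsum (a *: X) = a * mxsum X.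
Proof.
rewrite /mxsum mulr_sumr; apply: eq_bigr => i _.
by rewrite mulr_sumr; apply: eq_bigr => j _; rewrite mxE.
Qed.

Lemma mxsumD X Y : mxsum (X + Y) = mxsum X + mxsum Y.
Proof. exact: raddfD. Qed.

Lemma mxsum_sum I (r : seq I) (P : pred I) (F : I -> 'M[C]_n) :
  mxsum (\sum_(i <- r | P i) F i) = \sum_(i <- r | P i) mxsum (F i).
Proof. exact: raddf_sum. Qed.

Lemma mxtrace_mul_const1 X : \tr (X *m const_mx 1) = mxsum X.
Proof.
by apply: eq_bigr => i _; rewrite mxE; apply: eq_bigr => j _; rewrite mxE mulr1.
Qed.

Lemma mxsum_mul_const1 X Y : mxsum (X *m const_mx 1 *m Y) = mxsum X * mxsum Y.
Proof.
rewrite /mxsum mulr_suml; apply: eq_bigr => i _; rewrite mulr_sumr.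
under eq_bigr do rewrite mxE.
under eq_bigr do under eq_bigr do rewrite mxE.
under eq_bigr do under eq_bigr do under eq_bigr do rewrite mxE mulr1.
by rewrite exchange_big /=; apply: eq_bigr => p _; rewrite mulr_sumr.
Qed.

Definition Msum X : fps C := fun k => mxsum (X ^+ k).

End EntrySum.

Section RankOnePerturbation.
Variables (C : comRingType) (n : nat) (B : 'M[C]_n) (x : C).
Local Notation J := (const_mx 1 : 'M[C]_n).
Local Notation A := (B + x *: J).
Local Notation s := (Msum B).
Local Notation G := (fps_inv_1m (fps_scale x (fps_mulz s))).

Lemma mxsum_mul_expr_perturb k j :
  mxsum (B ^+ k * A ^+ j) = \sum_(l < j.+1) s (k + l)%N * G (j - l)%N.
Proof.
elim/ltn_ind: j k => j IHj k.
rewrite exprD_expand_l mulrDr mxsumD -exprD mulr_sumr mxsum_sum.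
rewrite big_ord_recr /= subnn fps_inv_1m_coef0 mulr1 addrC; congr (_ + _).
apply: eq_bigr => l _.
rewrite !mulrA -exprD -!mulmxE -scalemxAr -scalemxAl mxsumZ mxsum_mul_const1.
have lt_lj := ltn_ord l.
have -> : (j - l = (j.-1 - l).+1)%N by lia.
have lt_j'j : (j.-1 - l < j)%N by lia.
by rewrite fps_inv_1m_scale_mulzS -(IHj _ lt_j'j 0%N) expr0 mul1r mulrCA.
Qed.

Lemma mxtrace_expr_perturb m :
  \tr (A ^+ m) =
  \tr (B ^+ m) + fps_mul (fps_scale x (fps_mulz (fps_deriv (fps_mulz s)))) G m.
Proof.
rewrite exprD_expand_r mxtraceD raddf_sum /=; congr (_ + _).
under eq_bigr do rewrite -!mulmxE -scalemxAr -scalemxAl mxtraceZ mxtrace_mulC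
  mulmxA mxtrace_mul_const1 mulmxE mxsum_mul_expr_perturb.
rewrite -mulr_sumr.
pose f q := s q * G (m.-1 - q)%N.
have inner (k : 'I_m) :
    \sum_(l < (m.-1 - k).+1) s (k + l)%N * G (m.-1 - k - l)%N =
    \sum_(l < m - k) f (k + l)%N.
  have -> : ((m.-1 - k).+1 = m - k)%N by have := ltn_ord k; lia.
  by apply: eq_bigr => l _; rewrite /f subnDA.
rewrite (eq_bigr _ (fun k _ => inner k)) sum_triangle.
rewrite /fps_mul big_ord_recl {1}/fps_scale mulr0 mul0r add0r mulr_sumr.
apply: eq_bigr => q _; rewrite lift0 subnS predn_sub /fps_deriv /fps_scale /=.
by rewrite /f -mulrnAl mulrA.
Qed.

End RankOnePerturbation.

Lemma Mtil_Msum (R : rcfType) n (B : 'M[R[i]]_n) :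
  (0 < n)%N -> fps_scale n%:R (Mtil B) = Msum B.
Proof.
move=> n_gt0; apply: functional_extensionality => k.
by rewrite /fps_scale /Mtil /omega mulrA mulfV ?mul1r // pnatr_eq0 -lt0n.
Qed.

Theorem lemma4p3 (R : rcfType) (n : nat) (hn : (2 <= n)%N) (x : R[i]) :
  Mser (x *: Jmx R n + Bmx R n) =
  fps_add
    (fps_mul
       (fps_scale (n%:R * x) (fps_mulz (fps_deriv (fps_mulz (Mtil (Bmx R n))))))
       (fps_inv_1m (fps_scale (n%:R * x) (fps_mulz (Mtil (Bmx R n))))))
    (Mser (Bmx R n)).
Proof.
have n_gt0 : (0 < n)%N by apply: leq_trans hn.
(* Move the factor n onto Mtil, turning it into Msum. *)
rewrite mulrC !fps_scaleM -[fps_scale n%:R (fps_mulz (Mtil _))]fps_mulzZ.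
rewrite -fps_mulzZ -fps_derivZ -[fps_scale n%:R (fps_mulz _)]fps_mulzZ.
rewrite Mtil_Msum //; apply: functional_extensionality => m.
by rewrite /fps_add /Mser /Jmx addrC [RHS]addrC mxtrace_expr_perturb.
Qed.
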